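(* Let $K$ be an algebraically closed field of characteristic zero and $e_1\in 3+2\mathbb{N}$. Let $S\subset K^3$ be the surface $x_3^2+(x_1^{e_1}-x_2^2)x_1=0$, $S'\subset K^3$ the surface $\alpha^{2e_1}-4\beta\gamma=0$, $\sigma$ the involution $\sigma(\alpha,\beta,\gamma)=(-\alpha,\gamma,\beta)$ of $S'$, and $F:S'\to S$, $F(\alpha,\beta,\gamma)=(\alpha^2,\beta+\gamma,\alpha(\beta-\gamma))$. Then $F$ is the quotient map of the $\mathbb{Z}/2\mathbb{Z}$-action on $S'$ generated by $\sigma$; in particular $S=S'/\!/(\mathbb{Z}/2\mathbb{Z})$, i.e. via $F$ the ring $\mathcal{O}(S)$ is the ring of $\sigma^*$-invariants of $\mathcal{O}(S')$.
   Context: $\sigma^*(f)=f\circ\sigma$. *)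

From HB Require Import structures.
From mathcomp Require Import all_boot all_order all_algebra.
From mathcomp Require Export mpoly.
From mathcomp Require Export all_boot all_order all_algebra.
Set Implicit Arguments. Unset Strict Implicit. Unset Printing Implicit Defensive.
Import Order.TTheory GRing.Theory Num.Theory.
Local Open Scope ring_scope.

Definition pt3 (K : Type) := (K * K * K)%type.

Definition ev3 {K : closedFieldType} (p : {mpoly K[3]}) (x : pt3 K) : K :=
  let: (a, b, c) := x in p.@[fun i : 'I_3 => nth 0 [:: a; b; c] i].

Definition onS {K : closedFieldType} (e1 : nat) (x : pt3 K) : Prop :=
  let: (x1, x2, x3) := x in x3 ^+ 2 + (x1 ^+ e1 - x2 ^+ 2) * x1 = 0.

Definition onS' {K : closedFieldType} (e1 : nat) (x : pt3 K) : Prop :=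
  let: (a, b, c) := x in a ^+ (2 * e1) - 4 * b * c = 0.

Definition sigma3 {K : closedFieldType} (x : pt3 K) : pt3 K :=
  let: (a, b, c) := x in (- a, c, b).

Definition Fmap {K : closedFieldType} (x : pt3 K) : pt3 K :=
  let: (a, b, c) := x in (a ^+ 2, b + c, a * (b - c)).

(* f is a regular function on the (closed) subset P of K^3, i.e. the
   restriction to P of a polynomial function: an element of O(P). *)
Definition regular_on {K : closedFieldType} (P : pt3 K -> Prop)
  (f : pt3 K -> K) : Prop :=
  exists p : {mpoly K[3]}, forall x, P x -> f x = ev3 p x.

From HB Require Import structures.
From mathcomp Require Import all_boot all_order all_algebra.
From mathcomp Require Import mpoly.
From mathcomp Require Import ring.
Import Order.TTheory GRing.Theory Num.Theory.
Local Open Scope ring_scope.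

(* Write s = beta + gamma and d = beta - gamma.  The pull-back F^*O(S) is the
   algebra generated by alpha^2, s and alpha d; on S' it also contains
   d^2 = s^2 - (alpha^2)^e1.  Since beta = (s + d)/2 and gamma = (s - d)/2,
   every regular function on S' is u + alpha v + d w with u, v, w pulled back
   along F.  As F o sigma = F, sigma^* fixes u, v, w and negates alpha and d,
   so a sigma^*-invariant function equals u.  Injectivity of F^* holds because
   F maps S' onto S: given y on S choose alpha with alpha^2 = y1 and solve
   s = y2, d = y3 / alpha (if alpha = 0 then y3 = 0 as well). *)

Section PolynomialInduction.
Variables (R : nzRingType) (T : Type) (n : nat).
Variables (P : (T -> R) -> Prop) (v : T -> 'I_n -> R).
Hypothesis P_ext : forall {g h}, g =1 h -> P g -> P h.
Hypothesis P_cst : forall c, P (fun _ => c).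
Hypothesis P_add : forall {g h}, P g -> P h -> P (fun t => g t + h t).
Hypothesis P_mul : forall {g h}, P g -> P h -> P (fun t => g t * h t).
Hypothesis P_var : forall i, P (fun t => v t i).

Lemma closed_monomial (m : 'X_{1.. n}) (r : seq 'I_n) :
  P (fun t => \prod_(i <- r) v t i ^+ m i).
Proof.
have P_exp i k : P (fun t => v t i ^+ k).
  elim: k => [|k IHk]; first by apply: P_ext (P_cst 1) => t; rewrite expr0.
  by apply: P_ext (P_mul (P_var i) IHk) => t; rewrite exprS.
elim: r => [|i r IHr]; first by apply: P_ext (P_cst 1) => t; rewrite big_nil.
by apply: P_ext (P_mul (P_exp i (m i)) IHr) => t; rewrite big_cons.
Qed.

Lemma closed_meval (p : {mpoly R[n]}) : P (fun t => p.@[v t]).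
Proof.
elim/mpolyind: p => [|c m p _ _ IHp].
  by apply: P_ext (P_cst 0) => t; rewrite meval0.
apply: P_ext (P_add (P_mul (P_cst c) (closed_monomial m (index_enum _))) IHp).
by move=> t; rewrite mevalD mevalZ mevalX.
Qed.

End PolynomialInduction.

Lemma closed_field_sqrt {K : closedFieldType} (y : K) : exists r : K, r ^+ 2 = y.
Proof.
have [r hr] := @solve_monicpoly K 2 (nth 0 [:: y]) isT.
by exists r; rewrite hr !big_ord_recr big_ord0 /= add0r mul0r addr0 mulr1.
Qed.

Section Surfaces.
Variables (K : closedFieldType) (e1 : nat).
Implicit Types (x y : pt3 K) (p : {mpoly K[3]}) (f g h : pt3 K -> K).

Definition coord3 x (i : 'I_3) : K := nth 0 [:: x.1.1; x.1.2; x.2] i.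

Lemma ev3E p x : ev3 p x = p.@[coord3 x].
Proof. by case: x => [[a b] c]. Qed.

Lemma FmapE x : Fmap x = (x.1.1 ^+ 2, x.1.2 + x.2, x.1.1 * (x.1.2 - x.2)).
Proof. by case: x => [[a b] c]. Qed.

Lemma sigma3E x : sigma3 x = (- x.1.1, x.2, x.1.2).
Proof. by case: x => [[a b] c]. Qed.

Lemma sigma3K : involutive (@sigma3 K).
Proof. by case=> [[a b] c] /=; rewrite opprK. Qed.

Lemma Fmap_sigma3 x : Fmap (sigma3 x) = Fmap x.
Proof. by case: x => [[a b] c] /=; congr (_, _, _); ring. Qed.

Lemma onS'E x : onS' e1 x <-> x.1.1 ^+ (2 * e1) = 4 * x.1.2 * x.2.
Proof.
by case: x => [[a b] c] /=; split => [/eqP|->]; rewrite ?subrr // subr_eq0 => /eqP.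
Qed.

Lemma onS'_sigma3 x : onS' e1 x -> onS' e1 (sigma3 x).
Proof. by case: x => [[a b] c] /= H; rewrite exprM sqrrN -exprM -H; ring. Qed.

Lemma onS_Fmap x : onS' e1 x -> onS e1 (Fmap x).
Proof. by case: x => [[a b] c] /onS'E /= H; rewrite -exprM H; ring. Qed.

(* [regular_on D] is [regular_along D id], and [regular_along (onS' e1) Fmap]
   is the image of F^* : O(S) -> O(S'). *)
Definition regular_along (D : pt3 K -> Prop) (phi : pt3 K -> pt3 K) g :=
  exists p, forall x, D x -> g x = ev3 p (phi x).

Section RegularAlong.
Variables (D : pt3 K -> Prop) (phi : pt3 K -> pt3 K).

Lemma regular_along_ext {g h} :
  (forall x, D x -> g x = h x) -> regular_along D phi g -> regular_along D phi h.
Proof. by move=> gh [p Hp]; exists p => x Dx; rewrite -gh // Hp. Qed.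

Lemma regular_along_cst c : regular_along D phi (fun _ => c).
Proof. by exists c%:MP => x _; rewrite ev3E mevalC. Qed.

Lemma regular_along_add {g h} : regular_along D phi g -> regular_along D phi h ->
  regular_along D phi (fun x => g x + h x).
Proof. by move=> [p Hp] [q Hq]; exists (p + q) => x Dx; rewrite Hp // Hq // !ev3E mevalD. Qed.

Lemma regular_along_mul {g h} : regular_along D phi g -> regular_along D phi h ->
  regular_along D phi (fun x => g x * h x).
Proof. by move=> [p Hp] [q Hq]; exists (p * q) => x Dx; rewrite Hp // Hq // !ev3E mevalM. Qed.

Lemma regular_along_exp {g} k : regular_along D phi g ->
  regular_along D phi (fun x => g x ^+ k).
Proof.
move=> Hg; elim: k => [|k IHk]; first exact: regular_along_cst.
by apply: regular_along_ext (regular_along_mul Hg IHk) => x _; rewrite exprS.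
Qed.

Lemma regular_along_x1 : regular_along D phi (fun x => (phi x).1.1).
Proof. by exists 'X_0 => x _; rewrite ev3E mevalXU. Qed.

Lemma regular_along_x2 : regular_along D phi (fun x => (phi x).1.2).
Proof. by exists 'X_(Ordinal (isT : 1 < 3)%N) => x _; rewrite ev3E mevalXU. Qed.

Lemma regular_along_x3 : regular_along D phi (fun x => (phi x).2).
Proof. by exists 'X_(Ordinal (isT : 2 < 3)%N) => x _; rewrite ev3E mevalXU. Qed.

Lemma regular_along_ev3 (psi : pt3 K -> pt3 K) p :
  regular_along D phi (fun x => (psi x).1.1) ->
  regular_along D phi (fun x => (psi x).1.2) ->
  regular_along D phi (fun x => (psi x).2) ->
  regular_along D phi (fun x => ev3 p (psi x)).
Proof.
move=> H1 H2 H3.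
have Hext g h : g =1 h -> regular_along D phi g -> regular_along D phi h.
  by move=> gh; apply: regular_along_ext => x _; rewrite gh.
have Hcoord i : regular_along D phi (fun x => coord3 (psi x) i).
  by case: i => [[|[|[|//]]]] i_lt /=.
have := @closed_meval K _ 3 (regular_along D phi) _ Hext
  regular_along_cst (@regular_along_add) (@regular_along_mul) Hcoord p.
by apply: regular_along_ext => x _; rewrite ev3E.
Qed.

End RegularAlong.
Arguments regular_along_ext {D phi g h}.
Arguments regular_along_cst {D phi}.
Arguments regular_along_add {D phi g h}.
Arguments regular_along_mul {D phi g h}.
Arguments regular_along_exp {D phi g} k.
Arguments regular_along_x1 {D phi}.
Arguments regular_along_x2 {D phi}.
Arguments regular_along_x3 {D phi}.

Lemma regular_on_pullback f :
  regular_on (onS e1) f -> regular_on (onS' e1) (f \o Fmap).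
Proof.
case=> p Hp.
have : regular_along (onS' e1) id (fun x => ev3 p (Fmap x)).
  apply: regular_along_ev3.
  - apply: regular_along_ext (regular_along_exp 2 regular_along_x1).
    by move=> x _; rewrite FmapE.
  - apply: regular_along_ext (regular_along_add regular_along_x2 regular_along_x3).
    by move=> x _; rewrite FmapE.
  - apply: regular_along_ext (regular_along_mul regular_along_x1 (regular_along_add
      regular_along_x2 (regular_along_mul (regular_along_cst (-1)) regular_along_x3))).
    by move=> x _; rewrite FmapE /= mulN1r.
by apply: regular_along_ext => x Hx /=; rewrite Hp //; apply: onS_Fmap.
Qed.

Local Notation pulled_back := (regular_along (onS' e1) Fmap).

Lemma pulled_back_sigma3 {g} x : pulled_back g -> onS' e1 x -> g (sigma3 x) = g x.
Proof. by case=> p Hp Hx; rewrite (Hp (sigma3 x)) ?Fmap_sigma3 -?Hp //; apply: onS'_sigma3. Qed.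

Lemma pulled_back_alpha2 : pulled_back (fun x => x.1.1 ^+ 2).
Proof. by apply: regular_along_ext regular_along_x1 => x _; rewrite FmapE. Qed.

Lemma pulled_back_sum : pulled_back (fun x => x.1.2 + x.2).
Proof. by apply: regular_along_ext regular_along_x2 => x _; rewrite FmapE. Qed.

Lemma pulled_back_alpha_diff : pulled_back (fun x => x.1.1 * (x.1.2 - x.2)).
Proof. by apply: regular_along_ext regular_along_x3 => x _; rewrite FmapE. Qed.

Lemma pulled_back_diff2 : pulled_back (fun x => (x.1.2 - x.2) ^+ 2).
Proof.
apply: regular_along_ext (regular_along_add (regular_along_exp 2 pulled_back_sum)
  (regular_along_mul (regular_along_cst (-1)) (regular_along_exp e1 pulled_back_alpha2))).
by move=> x /onS'E Hx; rewrite -exprM Hx; ring.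
Qed.

Local Ltac pulled_back_closure := repeat first
  [ assumption | exact: regular_along_cst
  | exact: pulled_back_alpha2 | exact: pulled_back_sum
  | exact: pulled_back_alpha_diff | exact: pulled_back_diff2
  | apply: regular_along_add | apply: regular_along_mul ].

Definition pullback_span g := exists u v w,
  [/\ pulled_back u, pulled_back v, pulled_back w &
      forall x, onS' e1 x -> g x = u x + x.1.1 * v x + (x.1.2 - x.2) * w x].

Lemma pullback_span_ext g h :
  (forall x, onS' e1 x -> g x = h x) -> pullback_span g -> pullback_span h.
Proof.
by move=> gh [u [v [w [Hu Hv Hw Eg]]]]; exists u, v, w; split => // x Hx; rewrite -gh ?Eg.
Qed.

Lemma pullback_span_cst c : pullback_span (fun _ => c).
Proof. by exists (fun _ => c), (fun _ => 0), (fun _ => 0); split; pulled_back_closure => x _; ring. Qed.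

Lemma pullback_span_add g h : pullback_span g -> pullback_span h ->
  pullback_span (fun x => g x + h x).
Proof.
move=> [u [v [w [Hu Hv Hw Eg]]]] [u' [v' [w' [Hu' Hv' Hw' Eh]]]].
exists (fun x => u x + u' x), (fun x => v x + v' x), (fun x => w x + w' x).
by split; pulled_back_closure; move=> x Hx; rewrite Eg // Eh //; ring.
Qed.

(* alpha^2, alpha (beta - gamma) and (beta - gamma)^2 are pulled back, so the
   span is closed under products. *)
Lemma pullback_span_mul g h : pullback_span g -> pullback_span h ->
  pullback_span (fun x => g x * h x).
Proof.
move=> [u [v [w [Hu Hv Hw Eg]]]] [u' [v' [w' [Hu' Hv' Hw' Eh]]]].
exists (fun x => u x * u' x + x.1.1 ^+ 2 * (v x * v' x) + (x.1.2 - x.2) ^+ 2 * (w x * w' x)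
                 + x.1.1 * (x.1.2 - x.2) * (v x * w' x + w x * v' x)),
       (fun x => u x * v' x + v x * u' x), (fun x => u x * w' x + w x * u' x).
by split; pulled_back_closure; move=> x Hx; rewrite Eg // Eh //; ring.
Qed.

Hypothesis two : (2 : K) != 0.

Lemma pullback_span_ev3 p : pullback_span (ev3 p).
Proof.
have Hext g h : g =1 h -> pullback_span g -> pullback_span h.
  by move=> gh; apply: pullback_span_ext => x _; rewrite gh.
have Hcoord i : pullback_span (fun x => coord3 x i).
  case: i => [[|[|[|//]]]] i_lt /=.
  - by exists (fun _ => 0), (fun _ => 1), (fun _ => 0); split; pulled_back_closure => x _; ring.
  - exists (fun x => 2^-1 * (x.1.2 + x.2)), (fun _ => 0), (fun _ => 2^-1).
    by split; pulled_back_closure; move=> x _; field.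
  - exists (fun x => 2^-1 * (x.1.2 + x.2)), (fun _ => 0), (fun _ => - 2^-1).
    by split; pulled_back_closure; move=> x _; field.
have := @closed_meval K _ 3 pullback_span coord3 Hext
  pullback_span_cst pullback_span_add pullback_span_mul Hcoord p.
by apply: pullback_span_ext => x _; rewrite ev3E.
Qed.

Lemma invariant_pulled_back h : regular_on (onS' e1) h ->
  (forall x, onS' e1 x -> h (sigma3 x) = h x) -> pulled_back h.
Proof.
move=> [p Hp] Hinv.
have [u [v [w [Hu Hv Hw Eh]]]] : pullback_span h.
  by apply: pullback_span_ext (pullback_span_ev3 p) => x Hx; rewrite Hp.
apply: regular_along_ext (Hu) => x Hx.
have Eh' := Eh _ (onS'_sigma3 _ Hx).
rewrite Hinv // (pulled_back_sigma3 x Hu) // (pulled_back_sigma3 x Hv) //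
  (pulled_back_sigma3 x Hw) // sigma3E /= in Eh'.
by apply: (mulfI two); rewrite [RHS]mulr_natl [RHS]mulr2n {1}Eh // Eh'; ring.
Qed.

Lemma Fmap_onto y : (0 < e1)%N -> onS e1 y -> exists2 x, onS' e1 x & Fmap x = y.
Proof.
case: y => [[y1 y2] y3] e1_gt0 /= Hy.
have Hy3 : y3 ^+ 2 = (y2 ^+ 2 - y1 ^+ e1) * y1.
  by apply/eqP; rewrite -subr_eq0 -Hy; apply/eqP; ring.
have [r r2] := closed_field_sqrt y1.
have [r0|r_neq0] := eqVneq r 0.
  have y1_0 : y1 = 0 by rewrite -r2 r0 expr0n.
  have : y3 ^+ 2 = 0 by rewrite Hy3 y1_0 mulr0.
  move/eqP; rewrite expf_eq0 /= => /eqP y3_0.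
  exists (0, y2, 0); last by rewrite /= y1_0 y3_0 expr0n addr0 mul0r.
  by rewrite /= expr0n muln_eq0 /= eqn0Ngt e1_gt0 /= mulr0 subrr.
exists (r, 2^-1 * (y2 + y3 / r), 2^-1 * (y2 - y3 / r)); last first.
  by rewrite /= r2; congr (_, _, _); field; rewrite ?r_neq0; exact: two.
apply/onS'E; rewrite /= exprM r2.
have -> : 4 * (2^-1 * (y2 + y3 / r)) * (2^-1 * (y2 - y3 / r)) = y2 ^+ 2 - (y3 / r) ^+ 2.
  by field; rewrite r_neq0; exact: two.
by rewrite expr_div_n Hy3 -r2 mulfK ?expf_neq0 //; ring.
Qed.

End Surfaces.
Arguments Fmap_onto {K e1} two {y}.
Arguments invariant_pulled_back {K e1} two {h}.

Theorem lemma10 (K : closedFieldType) (hchar : [pchar K] =i pred0)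
  (e1 : nat) (he1 : exists k : nat, e1 = (3 + 2 * k)%N) :
  [/\ (forall x : pt3 K, onS' e1 x -> onS' e1 (sigma3 x) /\ sigma3 (sigma3 x) = x),
      (forall x : pt3 K, onS' e1 x -> onS e1 (Fmap x) /\ Fmap (sigma3 x) = Fmap x),
      (forall f : pt3 K -> K, regular_on (onS e1) f -> regular_on (onS' e1) (f \o Fmap)),
      (forall f g : pt3 K -> K, regular_on (onS e1) f -> regular_on (onS e1) g ->
         (forall x : pt3 K, onS' e1 x -> f (Fmap x) = g (Fmap x)) ->
         forall y : pt3 K, onS e1 y -> f y = g y)
    & (forall h : pt3 K -> K, regular_on (onS' e1) h ->
         (forall x : pt3 K, onS' e1 x -> h (sigma3 x) = h x) ->
         exists f : pt3 K -> K, regular_on (onS e1) f /\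
           forall x : pt3 K, onS' e1 x -> f (Fmap x) = h x)].
Proof.
have two : (2 : K) != 0 by move/pcharf0P: hchar => ->.
have e1_gt0 : (0 < e1)%N by case: he1 => k ->.
split.
- by move=> x Hx; split; [apply: onS'_sigma3 | apply: sigma3K].
- by move=> x Hx; split; [apply: onS_Fmap | apply: Fmap_sigma3].
- exact: regular_on_pullback.
- by move=> f g _ _ Efg y /(Fmap_onto two e1_gt0) [x Hx <-]; apply: Efg.
- move=> h Hh Hinv; have [p Hp] := invariant_pulled_back two Hh Hinv.
  by exists (ev3 p); split; [exists p | move=> x Hx; rewrite Hp].
Qed.
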